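(* Let $V\in(\mathbb{R}\cup\{-\infty\})^{n\times p}$ have no row and no column identically $-\infty$, and suppose each column of $V$ has at least two finite entries. Consider the game $\Gamma$ defined below. The following are equivalent: (1) there are disjoint dominions for the two players in $\Gamma$; (2) there exist nonempty subsets $I,J\subset[n]$ with $I\cup J=[n]$, $I\cap J=\emptyset$, such that some columns of $V$ have support included in $I$, and the other columns of $V$ have at least two finite entries in $J$; (3) there exists $K\subset[p]$ with $K\neq\emptyset$, $K\neq[p]$, such that, denoting by $I_K$ the union of the supports of the columns of $V$ indexed by $K$, every column not in $K$ has at least two finite entries outside $I_K$. Moreover, in case (3), $I_K$ and $[n]\setminus I_K$ are disjoint dominions of players Min and Max respectively.
   Context: Support of a column: set of indices of its finite entries. Let $E=\{(i,k):V_{ik}\neq-\infty\}$. The game $\Gamma$ is a repeated two-player game with states $[n]$: at state $i$, player Min chooses a column $k$ with $(i,k)\in E$, then player Max chooses $j\in[n]$ with $j\neq i$ and $(j,k)\in E$, and the game moves to state $j$ (Min pays $-V_{ik}$ and then $V_{jk}$ to Max; payments are irrelevant here). A dominion of a player is a nonempty set $I\subset[n]$ such that this player has a policy ensuring that, from any initial state in $I$ and whatever the other player does, all states visited (at Min's turns) remain in $I$. *)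

(* Entries of V live in R ∪ {-oo}, encoded as option R
   with None = -oo and Some x = the finite real x. *)
From mathcomp Require Import all_boot all_order all_algebra.
From mathcomp Require Import reals.
Set Implicit Arguments. Unset Strict Implicit. Unset Printing Implicit Defensive.

Section Game.
Variables (R : realType) (n p : nat) (V : 'M[option R]_(n, p)).

Definition finite_entry (i : 'I_n) (k : 'I_p) : bool := V i k != None.

Definition supp (k : 'I_p) : {set 'I_n} := [set i | finite_entry i k].

(* A (stationary) policy of Min: at state i choose column sigma i.
   A play consistent with sigma: a sequence of states s_0, s_1, ... where
   s_{t+1} is an admissible move of Max after Min plays sigma (s_t). *)
Definition min_play (sigma : 'I_n -> 'I_p) (s : nat -> 'I_n) : Prop :=
  forall t, s t.+1 != s t /\ finite_entry (s t.+1) (sigma (s t)).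

Definition min_dominion (I : {set 'I_n}) : Prop :=
  I != set0 /\
  exists sigma : 'I_n -> 'I_p,
    (forall i, i \in I -> finite_entry i (sigma i)) /\
    (forall s, min_play sigma s -> s 0 \in I -> forall t, s t \in I).

(* A (stationary) policy of Max: at state i, after Min chose column k,
   move to tau i k.  A play consistent with tau: Min chooses admissible
   columns k_t arbitrarily. *)
Definition max_play (tau : 'I_n -> 'I_p -> 'I_n) (s : nat -> 'I_n) : Prop :=
  exists c : nat -> 'I_p,
    forall t, finite_entry (s t) (c t) /\ s t.+1 = tau (s t) (c t).

Definition max_dominion (J : {set 'I_n}) : Prop :=
  J != set0 /\
  exists tau : 'I_n -> 'I_p -> 'I_n,
    (forall i k, i \in J -> finite_entry i k ->
       tau i k != i /\ finite_entry (tau i k) k) /\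
    (forall s, max_play tau s -> s 0 \in J -> forall t, s t \in J).

Definition I_of (K : {set 'I_p}) : {set 'I_n} := \bigcup_(k in K) supp k.

End Game.

From mathcomp Require Import all_boot all_order all_algebra.
From mathcomp Require Import reals.
Set Implicit Arguments. Unset Strict Implicit. Unset Printing Implicit Defensive.

(* A nonempty set I is a dominion of Min iff every state of I lies in the
   support of a column whose support is contained in I, and a nonempty set J
   is a dominion of Max iff every column whose support meets J meets it in at
   least two states.  With these characterizations, conditions (1), (2) and
   (3) are set-theoretic reformulations of one another, and for (3) the sets
   I_K and ~: I_K are the witnesses of (2). *)

Lemma card_gt1_exists_neq (T : finType) (A : {set T}) (x : T) :
  1 < #|A| -> exists2 y, y \in A & y != x.
Proof.
move=> A_gt1; have : 0 < #|A :\ x|.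
  by move: A_gt1; rewrite (cardsD1 x A); case: (x \in A) => [|/ltnW].
by rewrite card_gt0 => /set0Pn [y]; rewrite !inE => /andP [yx yA]; exists y.
Qed.

Section Dominions.

Variables (R : realType) (n p : nat) (V : 'M[option R]_(n, p)).

Hypothesis rows_ok : forall i : 'I_n, exists k : 'I_p, finite_entry V i k.
Hypothesis cols_ok : forall k : 'I_p, exists i : 'I_n, finite_entry V i k.
Hypothesis cols_two : forall k : 'I_p, 1 < #|supp V k|.

Lemma in_supp i k : (i \in supp V k) = finite_entry V i k.
Proof. by rewrite inE. Qed.

Lemma min_dominion_supp_sub I :
  min_dominion V I ->
  forall i, i \in I -> exists2 k, i \in supp V k & supp V k \subset I.
Proof.
move=> [_ [sigma [sigma_ok sigma_stays]]] i iI.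
exists (sigma i); first by rewrite in_supp sigma_ok.
apply/subsetP => j j_supp; have [-> // | ji] := eqVneq j i.
(* Since columns have two finite entries, the play i, j, ... can be continued forever. *)
have next_ex x : exists y, y \in supp V (sigma x) /\ y != x.
  by have [y] := card_gt1_exists_neq x (cols_two (sigma x)); exists y.
have [next next_ok] := fin_all_exists next_ex.
pose s t := if t is t'.+1 then iter t' next j else i.
have s_play : min_play V sigma s.
  case=> [|t] /=; first by rewrite ji -in_supp.
  by have [next_supp ->] := next_ok (iter t next j); rewrite -in_supp.
exact: (sigma_stays s s_play iI 1).
Qed.

Lemma min_dominion_of_supp_sub I :
  I != set0 ->
  (forall i, i \in I -> exists2 k, i \in supp V k & supp V k \subset I) ->
  min_dominion V I.
Proof.
move=> I_neq0 I_closed; split => //.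
have [i0 i0I] := set0Pn _ I_neq0; have [k0 _ _] := I_closed i0 i0I.
have sigma_ex i : exists k,
    i \in I -> i \in supp V k /\ supp V k \subset I.
  case: (boolP (i \in I)) => [iI | _]; last by exists k0.
  by have [k ? ?] := I_closed i iI; exists k.
have [sigma sigma_ok] := fin_all_exists sigma_ex.
exists sigma; split => [i /sigma_ok [] | s s_play s0I]; first by rewrite in_supp.
elim=> [// | t stI]; have [_ sigma_sub] := sigma_ok _ stI.
by apply: (subsetP sigma_sub); rewrite in_supp; case: (s_play t).
Qed.

Lemma max_dominion_card_gt1 J :
  max_dominion V J -> forall k, supp V k :&: J != set0 -> 1 < #|supp V k :&: J|.
Proof.
move=> [_ [tau [tau_ok tau_stays]]] k /set0Pn [i]; rewrite inE in_supp.
case/andP=> i_k iJ; have [tau_neq tau_k] := tau_ok i k iJ i_k.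
(* Min opens with column k and afterwards plays any admissible column. *)
have [col col_ok] := fin_all_exists rows_ok.
pose s t := if t is t'.+1 then iter t' (fun x => tau x (col x)) (tau i k) else i.
have s_play : max_play V tau s.
  by exists (fun t => if t is 0 then k else col (s t)); case.
apply/card_gt1P; exists i, (tau i k).
by rewrite !inE i_k iJ tau_k (tau_stays s s_play iJ 1) eq_sym.
Qed.

Lemma max_dominion_of_card_gt1 J :
  J != set0 ->
  (forall k, supp V k :&: J != set0 -> 1 < #|supp V k :&: J|) ->
  max_dominion V J.
Proof.
move=> J_neq0 J_closed; split => //.
have tau_ex i k : exists j,
    i \in supp V k :&: J -> j \in supp V k :&: J /\ j != i.
  case: (boolP (i \in supp V k :&: J)) => [i_kJ | _]; last by exists i.
  have [|j] := card_gt1_exists_neq i (J_closed k _); first by apply/set0Pn; exists i.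
  by exists j.
have [tau tau_ok] := fin_all_exists (fun i => fin_all_exists (tau_ex i)).
have tau_kJ i k : i \in J -> finite_entry V i k -> tau i k \in supp V k :&: J /\ tau i k != i.
  by move=> iJ i_k; apply: tau_ok; rewrite inE in_supp i_k.
exists tau; split => [i k iJ /(tau_kJ i k iJ) [] | s [col s_play] s0J].
  by rewrite inE in_supp => /andP [].
elim=> [// | t stJ]; have [st_col ->] := s_play t.
by have [] := tau_kJ _ _ stJ st_col; rewrite inE => /andP [].
Qed.

Lemma supp_sub_I_of (K : {set 'I_p}) k : k \in K -> supp V k \subset I_of V K.
Proof. exact: bigcup_sup. Qed.

Lemma I_of_min_dominion (K : {set 'I_p}) : K != set0 -> min_dominion V (I_of V K).
Proof.
move=> /set0Pn [k kK]; apply: min_dominion_of_supp_sub.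
  have [i i_k] := cols_ok k; apply/set0Pn; exists i.
  by apply: (subsetP (supp_sub_I_of kK)); rewrite in_supp.
move=> i /bigcupP [k' k'K i_k']; exists k' => //; exact: supp_sub_I_of.
Qed.

Lemma max_dominion_of_columns (K : {set 'I_p}) J :
  J != set0 ->
  (forall k, k \in K -> supp V k \subset ~: J) ->
  (forall k, k \notin K -> 1 < #|supp V k :&: J|) ->
  max_dominion V J.
Proof.
move=> J_neq0 K_out Kc_in; apply: max_dominion_of_card_gt1 => // k.
have [kK | /Kc_in //] := boolP (k \in K).
by rewrite setI_eq0 disjoints_subset K_out.
Qed.

Definition partition_witness (I J : {set 'I_n}) (K : {set 'I_p}) : Prop :=
  [/\ I != set0, J != set0, I :|: J = [set: 'I_n] & I :&: J = set0] /\
  [/\ K != set0,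
      (forall k, k \in K -> supp V k \subset I) &
      (forall k, k \notin K -> 1 < #|supp V k :&: J|)].

Definition column_witness (K : {set 'I_p}) : Prop :=
  [/\ K != set0, K != [set: 'I_p] &
      (forall k, k \notin K -> 1 < #|supp V k :\: I_of V K|)].

Lemma partition_witness_of_dominions I J :
  min_dominion V I -> max_dominion V J -> I :&: J = set0 ->
  exists I' J' K, partition_witness I' J' K.
Proof.
move=> minI maxJ IJ0; have [i0 i0I] := set0Pn _ minI.1.
have I_subCJ : I \subset ~: J by rewrite -disjoints_subset -setI_eq0 IJ0.
exists (~: J), J, [set k | supp V k \subset ~: J].
split; split; rewrite ?(setUC _ J) ?(setIC _ J) ?setUCr ?setICr ?maxJ.1 //.
- by apply/set0Pn; exists i0; apply: (subsetP I_subCJ).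
- have [k _ k_sub] := min_dominion_supp_sub minI i0I.
  by apply/set0Pn; exists k; rewrite inE (subset_trans k_sub).
- by move=> k; rewrite inE.
- move=> k; rewrite inE -disjoints_subset -setI_eq0.
  exact: max_dominion_card_gt1 maxJ k.
Qed.

Lemma I_of_disjoint_partition I J K :
  partition_witness I J K -> I_of V K :&: J = set0.
Proof.
move=> [[_ _ _ IJ0] [_ K_sub _]].
by apply/eqP; rewrite -subset0 -IJ0 setSI //; apply/bigcupsP.
Qed.

Lemma dominions_of_partition_witness I J K :
  partition_witness I J K ->
  [/\ min_dominion V (I_of V K), max_dominion V J & I_of V K :&: J = set0].
Proof.
move=> IJK; have [[_ J_neq0 _ IJ0] [K_neq0 K_sub Kc_in]] := IJK.
have I_subCJ : I \subset ~: J by rewrite -disjoints_subset -setI_eq0 IJ0.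
split; [exact: I_of_min_dominion | | exact: I_of_disjoint_partition IJK].
apply: (max_dominion_of_columns J_neq0 _ Kc_in) => k kK.
exact: subset_trans (K_sub k kK) I_subCJ.
Qed.

Lemma column_witness_of_partition I J K :
  partition_witness I J K -> column_witness K.
Proof.
move=> IJK; have [[_ J_neq0 _ IJ0] [K_neq0 K_sub Kc_in]] := IJK; split => //.
  have [j jJ] := set0Pn _ J_neq0; have [k j_k] := rows_ok j.
  apply/eqP => KT; suff : j \in I :&: J by rewrite IJ0 inE.
  by rewrite inE jJ andbT (subsetP (K_sub k _)) ?KT ?inE ?in_supp.
move=> k kNK; apply: leq_trans (Kc_in k kNK) _; apply: subset_leq_card.
rewrite setDE setIS // -disjoints_subset disjoint_sym -setI_eq0.
by rewrite (I_of_disjoint_partition IJK).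
Qed.

Lemma partition_of_column_witness K :
  column_witness K -> partition_witness (I_of V K) (~: I_of V K) K.
Proof.
move=> [K_neq0 K_neqT Kc_out]; rewrite /partition_witness setUCr setICr.
split; split => //; last 2 first.
- exact: supp_sub_I_of.
- by move=> k kNK; rewrite -setDE; apply: Kc_out.
- by have [] := I_of_min_dominion K_neq0.
- have [k _ kNK] : exists2 k, k \in [set: 'I_p] & k \notin K.
    by apply/subsetPn; rewrite subTset.
  have /set0Pn [i] : supp V k :\: I_of V K != set0.
    by rewrite -card_gt0 ltnW ?Kc_out.
  by rewrite inE => /andP [iNI _]; apply/set0Pn; exists i; rewrite inE.
Qed.

End Dominions.

Theorem propositionA2 (R : realType) (n p : nat) (V : 'M[option R]_(n, p))
  (rows_ok : forall i : 'I_n, exists k : 'I_p, finite_entry V i k)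
  (cols_ok : forall k : 'I_p, exists i : 'I_n, finite_entry V i k)
  (cols_two : forall k : 'I_p, 2 <= #|supp V k|) :
  ((* (1) <-> (2) *)
   ((exists I J : {set 'I_n},
      [/\ min_dominion V I, max_dominion V J & I :&: J = set0]) <->
   (exists (I J : {set 'I_n}) (K : {set 'I_p}),
      [/\ I != set0, J != set0, I :|: J = [set: 'I_n] & I :&: J = set0] /\
      [/\ K != set0,
          (forall k, k \in K -> supp V k \subset I) &
          (forall k, k \notin K -> 2 <= #|supp V k :&: J|)])) /\
   (* (2) <-> (3) *)
   ((exists (I J : {set 'I_n}) (K : {set 'I_p}),
      [/\ I != set0, J != set0, I :|: J = [set: 'I_n] & I :&: J = set0] /\
      [/\ K != set0,
          (forall k, k \in K -> supp V k \subset I) &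
          (forall k, k \notin K -> 2 <= #|supp V k :&: J|)]) <->
   (exists K : {set 'I_p},
      [/\ K != set0, K != [set: 'I_p] &
          (forall k, k \notin K -> 2 <= #|supp V k :\: I_of V K|)])) /\
   (* moreover *)
   (forall K : {set 'I_p},
      K != set0 -> K != [set: 'I_p] ->
      (forall k, k \notin K -> 2 <= #|supp V k :\: I_of V K|) ->
      min_dominion V (I_of V K) /\ max_dominion V (~: I_of V K))).
Proof.
split; [split | split; [split |]].
- case=> I [J [minI maxJ IJ0]].
  exact: (partition_witness_of_dominions rows_ok cols_two minI maxJ IJ0).
- case=> I [J [K /(dominions_of_partition_witness cols_ok) [minI maxJ IJ0]]].
  by exists (I_of V K), J.
- case=> I [J [K /(column_witness_of_partition rows_ok) colK]].
  by exists K.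
- case=> K colK; exists (I_of V K), (~: I_of V K), K.
  exact: partition_of_column_witness.
- move=> K K_neq0 K_neqT Kc_out.
  have [minI maxJ _] := dominions_of_partition_witness cols_ok
    (partition_of_column_witness cols_ok (And3 K_neq0 K_neqT Kc_out)).
  by split.
Qed.
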